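(* Let $T\in\mathbb{N}$, $\beta_1,\dots,\beta_T\in(0,1)$, $\alpha_t=1-\beta_t$, $\bar\alpha_t=\prod_{i=1}^t\alpha_i$, and let $\sigma_t\ge0$ with $1-\bar\alpha_{t-1}-\sigma_t^2\ge0$ for $t=2,\dots,T$. Fix vectors $\bm y_0,\bm f\in\mathbb{R}^d$ (here $\bm f=f_\phi(\bm c)$ is the output of a fixed pre-trained regressor at the covariate $\bm c$). Define a joint distribution of $\bm y_1,\dots,\bm y_T$ given $\bm y_0$ by $$p(\bm y_T\mid\bm y_0)=\mathcal{N}\big(\sqrt{\bar\alpha_T}\bm y_0+(1-\sqrt{\bar\alpha_T})\bm f,\ (1-\bar\alpha_T)\mathbf{I}\big)$$ and, for $t=T,\dots,2$, $p(\bm y_{t-1}\mid\bm y_t,\bm y_0)=\mathcal{N}(\bm\mu(\bm y_0,\bm y_t),\sigma_t^2\mathbf{I})$ with $$\bm\mu(\bm y_0,\bm y_t)=\sqrt{\bar\alpha_{t-1}}\bm y_0+(1-\sqrt{\bar\alpha_{t-1}})\bm f+\sqrt{1-\bar\alpha_{t-1}-\sigma_t^2}\,\frac{\bm y_t-\big(\sqrt{\bar\alpha_t}\bm y_0+(1-\sqrt{\bar\alpha_t})\bm f\big)}{\sqrt{1-\bar\alpha_t}}.$$ Then for every $t=1,\dots,T$, $$p(\bm y_t\mid\bm y_0)=\mathcal{N}\big(\sqrt{\bar\alpha_t}\bm y_0+(1-\sqrt{\bar\alpha_t})\bm f,\ (1-\bar\alpha_t)\mathbf{I}\big).$$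
   Context: This is the CARD (classification and regression diffusion) model written in the DDIM framework, where the diffusion interpolates between the data distribution and $\mathcal{N}(f_\phi(\bm c),\mathbf{I})$. *)

From HB Require Import structures.
From mathcomp Require Import all_boot all_order all_algebra.
From mathcomp Require Import all_classical all_reals all_analysis.
Set Implicit Arguments. Unset Strict Implicit. Unset Printing Implicit Defensive.
Import Order.TTheory GRing.Theory Num.Theory.
Local Open Scope classical_set_scope.
Local Open Scope ring_scope.

Section card.
Context {R : realType}.

(* integral of a nonnegative function h against the standard Gaussian N(0, I) on R^n,
   defined as the n-fold product of the standard normal N(0,1) (iterated integral) *)
Fixpoint std_gauss_int (n : nat) : (n.-tuple R -> \bar R) -> \bar R :=
  match n with
  | 0 => fun h => h [tuple]
  | n'.+1 => fun h =>
      (\int[normal_prob 0 1]_z std_gauss_int (fun t : n'.-tuple R => h (cons_tuple z t)))%E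
  end.

(* integral of g against N(m, s^2 I) on R^d (s >= 0), the image of N(0,I) by z |-> m + s z *)
Definition gauss_int (d : nat) (m : d.-tuple R) (s : R) (g : d.-tuple R -> \bar R) : \bar R :=
  std_gauss_int (fun z : d.-tuple R => g [tuple tnth m i + s * tnth z i | i < d]).

Definition gauss_prob (d : nat) (m : d.-tuple R) (s : R) (A : set (d.-tuple R)) : \bar R :=
  gauss_int m s (fun y => (\1_A y)%:E).

Definition abar (beta : nat -> R) (t : nat) : R := \prod_(1 <= i < t.+1) (1 - beta i).

Definition card_mean (beta : nat -> R) (d : nat) (y0 f : d.-tuple R) (t : nat) : d.-tuple R :=
  [tuple Num.sqrt (abar beta t) * tnth y0 i + (1 - Num.sqrt (abar beta t)) * tnth f i | i < d].

Definition card_mu (beta sigma : nat -> R) (d : nat) (y0 f : d.-tuple R) (t : nat)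
    (yt : d.-tuple R) : d.-tuple R :=
  [tuple tnth (card_mean beta y0 f t.-1) i
     + Num.sqrt (1 - abar beta t.-1 - sigma t ^+ 2)
       * ((tnth yt i - tnth (card_mean beta y0 f t) i) / Num.sqrt (1 - abar beta t)) | i < d].

(* card_marg_int T k g = E[g(y_{T-k}) | y0] under the joint distribution
   p(y_T|y0) prod_{t=T..2} p(y_{t-1}|y_t,y0)  (for k <= T-1) *)
Fixpoint card_marg_int (beta sigma : nat -> R) (d : nat) (y0 f : d.-tuple R) (T : nat)
    (k : nat) (g : d.-tuple R -> \bar R) : \bar R :=
  match k with
  | 0 => gauss_int (card_mean beta y0 f T) (Num.sqrt (1 - abar beta T)) g
  | k'.+1 => card_marg_int beta sigma y0 f T k'
      (fun yt => gauss_int (card_mu beta sigma y0 f (T - k')%N yt) (sigma (T - k')%N) g)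
  end.

Definition card_marg (beta sigma : nat -> R) (d : nat) (y0 f : d.-tuple R) (T t : nat)
    (A : set (d.-tuple R)) : \bar R :=
  card_marg_int beta sigma y0 f T (T - t)%N (fun y => (\1_A y)%:E).

End card.

From HB Require Import structures.
From mathcomp Require Import all_boot all_order all_algebra.
From mathcomp Require Import all_classical all_reals all_analysis.
From mathcomp Require Import ring lra zify measurable_realfun.
Import Order.TTheory GRing.Theory Num.Theory.
Local Open Scope classical_set_scope.
Local Open Scope ring_scope.

(* Each reverse step is a Gaussian convolution.  Write m_t for the mean
   sqrt(abar_t) y0 + (1 - sqrt(abar_t)) f and s_t = sqrt(1 - abar_t).  If
   y_t = m_t + s_t z with z standard normal, then mu(y0, y_t) = m_{t-1} + c_t z
   with c_t = sqrt(1 - abar_{t-1} - sigma_t^2), hence y_{t-1} = m_{t-1} + c_t z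
   + sigma_t w with w standard normal and independent of z.  As
   c_t^2 + sigma_t^2 = s_{t-1}^2, the vector c_t z + sigma_t w has the law of
   s_{t-1} u with u standard normal, and descending induction from t = T gives
   every marginal.  In dimension one, a z + b w ~ N(0, a^2 + b^2) follows from
   Fubini and the factorisation of the joint density of (z, a z + b w) into the
   marginal density of a z + b w times the conditional density of z; in
   dimension d it is applied coordinatewise. *)

Section integral_density.
Local Open Scope ereal_scope.
Context d (T : measurableType d) (R : realType).
Variables (mu nu : {measure set T -> \bar R}) (g : T -> R).
Hypothesis mg : measurable_fun setT g.
Hypothesis g_ge0 : forall x, (0 <= g x)%R.
Hypothesis nuE : forall A, measurable A -> nu A = \int[mu]_(x in A) (g x)%:E.

Let integral_density_indic E : measurable E ->
  \int[nu]_x (\1_E x)%:E = \int[mu]_x ((g x)%:E * (\1_E x)%:E).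
Proof.
move=> mE; rewrite integral_indic// setIT nuE// integral_mkcond.
apply: eq_integral => x _; rewrite patchE indicE.
by case: ifPn => _; rewrite ?mule1 ?mule0.
Qed.

Import HBNNSimple.

Let integral_density_nnsfun (h : {nnsfun T >-> R}) :
  \int[nu]_x (h x)%:E = \int[mu]_x ((g x)%:E * (h x)%:E).
Proof.
under [LHS]eq_integral do rewrite fimfunE -fsumEFin//.
rewrite [LHS]ge0_integral_fsum//; last 2 first.
- by move=> r; exact/measurable_EFinP/measurableT_comp.
- by move=> n x _; rewrite EFinM nnfun_muleindic_ge0.
under [RHS]eq_integral => x _.
  rewrite fimfunE -fsumEFin// ge0_mule_fsumr; last first.
    by move=> r; rewrite EFinM nnfun_muleindic_ge0.
  over.
rewrite [RHS]ge0_integral_fsum//; last 2 first.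
- move=> r; apply/measurable_EFinP; apply: measurable_funM => //.
  by do 2 apply/measurableT_comp => //.
- by move=> n x _; rewrite mule_ge0 ?nnfun_muleindic_ge0// lee_fin.
apply: eq_fsbigr => r _; rewrite integralZl_indic_nnsfun//.
have [r_ge0|r_lt0] := leP 0%R r; last first.
  rewrite (preimage_nnfun0 _ r_lt0) indic0 integral0 mule0.
  by rewrite integral0_eq// => x _ /=; rewrite mulr0 mule0.
rewrite integral_density_indic// -ge0_integralZl//.
- by apply: eq_integral => x _; rewrite EFinM muleCA.
- apply: emeasurable_funM; first exact/measurable_EFinP.
  apply/measurable_EFinP/measurable_indic.
  by apply: measurable_funPTI; exact: measurable_set1.
- by move=> x _; rewrite mule_ge0// lee_fin.
Qed.

Lemma ge0_integral_density (f : T -> \bar R) :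
  measurable_fun setT f -> (forall x, 0 <= f x) ->
  \int[nu]_x f x = \int[mu]_x ((g x)%:E * f x).
Proof.
move=> mf f0; pose f_ := nnsfun_approx measurableT mf.
transitivity (limn (fun n => \int[nu]_x (f_ n x)%:E)).
  rewrite -monotone_convergence//=.
  - apply: eq_integral => x _; apply/esym/cvg_lim => //=.
    exact: cvg_nnsfun_approx.
  - by move=> n; exact/measurable_EFinP.
  - by move=> n x _; rewrite lee_fin.
  - by move=> x _ m n mn; rewrite lee_fin; exact/lefP/nd_nnsfun_approx.
under eq_fun do rewrite integral_density_nnsfun.
rewrite -monotone_convergence//=.
- apply: eq_integral => x _; apply/cvg_lim => //=.
  by apply: cvgeZl => //; exact: cvg_nnsfun_approx.
- by move=> n; apply: emeasurable_funM; exact/measurable_EFinP.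
- by move=> n x _; rewrite mule_ge0// lee_fin.
- move=> x _ m n mn; apply: lee_wpmul2l; first by rewrite lee_fin.
  by rewrite lee_fin; exact/lefP/nd_nnsfun_approx.
Qed.

End integral_density.

Section lebesgue_measure_affine.
Context {R : realType}.
Local Notation mu := (@lebesgue_measure R).
Variables (c e : R).
Hypothesis c_gt0 : 0 < c.

Let aff : R -> measurableTypeR R := fun x => c * x + e.

Let measurable_aff : measurable_fun setT aff.
Proof. by apply: measurable_funD => //; exact: measurable_funM. Qed.

Let aff_preimage_itv a b :
  aff @^-1` `]a, b] = `](a - e) / c, (b - e) / c]%classic.
Proof.
apply/seteqP; split => x /=;
  by rewrite !in_itv/= ltr_pdivrMr// ler_pdivlMr// ![x * c]mulrC ltrBlDr lerBrDr.
Qed.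

Let lebesgue_measure_aff A : measurable A ->
  mu A = (c%:E * pushforward mu aff A)%E.
Proof.
move=> mA; have := @lebesgue_measure_unique R
  (mscale (NngNum (ltW c_gt0)) (pushforward mu aff)).
move=> /(_ measurable_aff) -> //= _ [[a b] _ <-].
change (mu `]a, b] = c%:E * mu (aff @^-1` `]a, b]))%E.
rewrite aff_preimage_itv !lebesgue_measure_itv/= !lte_fin.
rewrite ltr_pM2r ?invr_gt0// ltrD2r; case: ifPn => ab; last by rewrite mule0.
by rewrite -!EFinB -EFinM; congr EFin; field; rewrite gt_eqF.
Qed.

Lemma ge0_integral_affine (F : R -> \bar R) :
  measurable_fun setT F -> (forall x, 0 <= F x)%E ->
  (\int[mu]_x F x = c%:E * \int[mu]_x F (c * x + e)%R)%E.
Proof.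
move=> mF F0; rewrite (@eq_measure_integral _ _ _ setT
  (mscale (NngNum (ltW c_gt0)) (pushforward mu aff))).
  by rewrite ge0_integral_mscale//= ge0_integral_pushforward.
by move=> A mA _; exact: lebesgue_measure_aff.
Qed.

End lebesgue_measure_affine.

Section normal_convolution.
Context {R : realType}.
Local Notation mu := (@lebesgue_measure R).
Local Notation N := (@normal_prob R 0 1).

Lemma normal_pdf_expR (m s x : R) : s != 0 ->
  normal_pdf m s x = normal_peak s * expR (- (x - m) ^+ 2 / (s ^+ 2 *+ 2)).
Proof. by move=> s0; rewrite /normal_pdf (negbTE s0). Qed.

Lemma normal_peakM (s1 s2 s3 s4 : R) : s1 ^+ 2 * s2 ^+ 2 = s3 ^+ 2 * s4 ^+ 2 ->
  normal_peak s1 * normal_peak s2 = normal_peak s3 * normal_peak s4.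
Proof.
have sqr_pi2_ge0 (s : R) : 0 <= s ^+ 2 * pi *+ 2.
  by rewrite mulrn_wge0// mulr_ge0 ?sqr_ge0 ?pi_ge0.
have factor (u v : R) :
    u ^+ 2 * pi *+ 2 * (v ^+ 2 * pi *+ 2) = u ^+ 2 * v ^+ 2 * (pi *+ 2) ^+ 2.
  by rewrite -!mulrnAr; ring.
by rewrite /normal_peak -!invfM -!sqrtrM ?sqr_pi2_ge0// !factor => ->.
Qed.

Lemma normal_pdf_affine (m s w : R) : 0 < s ->
  s * normal_pdf m s (s * w + m) = normal_pdf 0 1 w.
Proof.
move=> s_gt0; rewrite !normal_pdf_expR ?oner_neq0 ?gt_eqF// mulrA.
congr (_ * expR _); last by rewrite subr0 addrK expr1n; field; rewrite gt_eqF.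
rewrite /normal_peak -!mulrnAr expr1n mul1r sqrtrM ?sqr_ge0// sqrtr_sqr.
by rewrite gtr0_norm// invfM mulrA divff ?mul1r// gt_eqF.
Qed.

Lemma ge0_integral_normal_prob (m s : R) (f : R -> \bar R) :
  measurable_fun setT f -> (forall x, (0 <= f x)%E) ->
  (\int[normal_prob m s]_x f x = \int[mu]_x ((normal_pdf m s x)%:E * f x))%E.
Proof.
move=> mf f0; apply: ge0_integral_density => //.
- exact: measurable_normal_pdf.
- exact: normal_pdf_ge0.
Qed.

Lemma ge0_integral_normal_prob_affine (m s : R) (h : R -> \bar R) : 0 < s ->
  measurable_fun setT h -> (forall x, (0 <= h x)%E) ->
  (\int[normal_prob m s]_x h x = \int[N]_w h (s * w + m)%R)%E.
Proof.
move=> s_gt0 mh h0; have mpdf := measurable_normal_pdf m s.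
have maffine : measurable_fun setT (fun w : R => s * w + m).
  by apply: measurable_funD => //; exact: measurable_funM.
rewrite ge0_integral_normal_prob// (ge0_integral_affine s m s_gt0); last 2 first.
- by apply: emeasurable_funM => //; exact/measurable_EFinP.
- by move=> x; rewrite mule_ge0// lee_fin normal_pdf_ge0.
rewrite -ge0_integralZl//; last 3 first.
- apply: emeasurable_funM; last exact: measurableT_comp mh maffine.
  by apply/measurable_EFinP; exact: measurableT_comp mpdf maffine.
- by move=> x _; rewrite mule_ge0// lee_fin normal_pdf_ge0.
- by rewrite lee_fin ltW.
rewrite ge0_integral_normal_prob//; last exact: measurableT_comp mh maffine.
by apply: eq_integral => w _; rewrite muleA -EFinM normal_pdf_affine.
Qed.

Lemma normal_pdf_bayes (a b y z : R) : 0 < b ->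
  normal_pdf 0 1 z * normal_pdf (a * z) b y =
  normal_pdf 0 (Num.sqrt (a ^+ 2 + b ^+ 2)) y *
  normal_pdf (a * y / (a ^+ 2 + b ^+ 2)) (b / Num.sqrt (a ^+ 2 + b ^+ 2)) z.
Proof.
move=> b_gt0; set q := a ^+ 2 + b ^+ 2.
have b2_gt0 : 0 < b ^+ 2 by rewrite exprn_gt0.
have q_gt0 : 0 < q by rewrite ltr_wpDl ?sqr_ge0.
have r_gt0 : 0 < Num.sqrt q by rewrite sqrtr_gt0.
rewrite !normal_pdf_expR ?oner_neq0 ?gt_eqF ?divr_gt0//.
rewrite mulrACA [RHS]mulrACA -!expRD; congr (_ * expR _).
  apply: normal_peakM; rewrite expr_div_n sqr_sqrtr ?ltW// expr1n.
  by field; rewrite gt_eqF.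
rewrite expr_div_n !sqr_sqrtr ?ltW// !mulr2n.
by rewrite /q; field; rewrite -/q !gt_eqF// addr_gt0.
Qed.

Lemma normal_pdf_marginal (a b y : R) : 0 < b ->
  (\int[mu]_z ((normal_pdf 0 1 z)%:E * (normal_pdf (a * z) b y)%:E) =
   (normal_pdf 0 (Num.sqrt (a ^+ 2 + b ^+ 2)) y)%:E)%E.
Proof.
move=> b_gt0; under eq_integral do rewrite -EFinM normal_pdf_bayes// EFinM.
rewrite ge0_integralZl ?lee_fin ?normal_pdf_ge0//.
- by rewrite integral_normal_pdf mule1.
- by apply/measurable_EFinP; exact: measurable_normal_pdf.
- by move=> z _; rewrite lee_fin normal_pdf_ge0.
Qed.

Lemma ge0_integral_normal_mixture (a b : R) (h : R -> \bar R) : 0 < b ->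
  measurable_fun setT h -> (forall x, (0 <= h x)%E) ->
  (\int[N]_z \int[normal_prob (a * z) b]_x h x =
   \int[normal_prob 0 (Num.sqrt (a ^+ 2 + b ^+ 2))]_x h x)%E.
Proof.
move=> b_gt0 mh h0.
have mpdf : measurable_fun setT (fun zx : R * R => normal_pdf (a * zx.1) b zx.2).
  under eq_fun do rewrite normal_pdf_expR ?gt_eqF//.
  apply: measurable_funM => //; apply: measurableT_comp => //.
  apply: measurable_funM => //; apply/measurable_funN/measurable_funX.
  apply: measurable_funB; first exact: measurable_snd.
  by apply: measurable_funM => //; exact: measurable_fst.
pose F (zx : R * R) := ((normal_pdf (a * zx.1) b zx.2)%:E * h zx.2)%E.
have mF : measurable_fun setT F.
  apply: emeasurable_funM; first exact/measurable_EFinP.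
  exact: measurableT_comp mh measurable_snd.
have F0 zx : (0 <= F zx)%E by rewrite mule_ge0// lee_fin normal_pdf_ge0.
pose G (zx : R * R) := ((normal_pdf 0 1 zx.1)%:E * F zx)%E.
have mG : measurable_fun setT G.
  apply: emeasurable_funM => //; apply/measurable_EFinP.
  exact: measurableT_comp (measurable_normal_pdf 0 1) measurable_fst.
have G0 zx : (0 <= G zx)%E by rewrite mule_ge0// lee_fin normal_pdf_ge0.
transitivity (\int[N]_z \int[mu]_x F (z, x))%E.
  by apply: eq_integral => z _; rewrite ge0_integral_normal_prob.
rewrite ge0_integral_normal_prob; last 2 first.
- exact: measurable_fun_fubini_tonelli_F.
- by move=> z; exact: integral_ge0.
transitivity (\int[mu]_z \int[mu]_x G (z, x))%E.
  apply: eq_integral => z _.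
  rewrite /G /= ge0_integralZl ?lee_fin ?normal_pdf_ge0//.
  exact: measurable_fun_pair2.
transitivity (\int[mu]_x \int[mu]_z G (z, x))%E; first exact: fubini_tonelli.
rewrite ge0_integral_normal_prob//.
apply: eq_integral => x _; rewrite -normal_pdf_marginal// -ge0_integralZr//.
- by apply: eq_integral => z _; rewrite /G /F /= muleA.
- apply: emeasurable_funM; apply/measurable_EFinP.
    exact: measurable_normal_pdf.
  exact: measurable_fun_pair1 x mpdf.
- by move=> z _; rewrite mule_ge0// lee_fin normal_pdf_ge0.
Qed.

Lemma ge0_integral_normal_sum (a b : R) (h : R -> \bar R) : 0 <= a -> 0 <= b ->
  measurable_fun setT h -> (forall x, (0 <= h x)%E) ->
  (\int[N]_z \int[N]_w h (a * z + b * w)%R =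
   \int[N]_u h (Num.sqrt (a ^+ 2 + b ^+ 2) * u)%R)%E.
Proof.
move=> a_ge0 b_ge0 mh h0; have [b0|b_gt0] := eqVneq b 0; last first.
  have {b_ge0 b_gt0}b_gt0 : 0 < b by rewrite lt_def b_gt0.
  have r_gt0 : 0 < Num.sqrt (a ^+ 2 + b ^+ 2).
    by rewrite sqrtr_gt0 ltr_wpDl ?sqr_ge0 ?exprn_gt0.
  transitivity (\int[N]_u h (Num.sqrt (a ^+ 2 + b ^+ 2) * u + 0)%R)%E; last first.
    by apply: eq_integral => u _; rewrite addr0.
  rewrite -(ge0_integral_normal_prob_affine 0 _ _ r_gt0 mh h0).
  rewrite -(ge0_integral_normal_mixture a _ _ b_gt0 mh h0).
  apply: eq_integral => z _.
  rewrite (ge0_integral_normal_prob_affine _ _ _ b_gt0 mh h0).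
  by apply: eq_integral => w _; rewrite addrC.
subst b; rewrite expr0n/= addr0 sqrtr_sqr ger0_norm//.
apply: eq_integral => z _; under eq_integral do rewrite mul0r addr0.
by rewrite integral_cst// -[RHS]mule1; congr (_ * _)%E; exact: probability_setT.
Qed.

End normal_convolution.

Lemma mktuple_cons (T : Type) n (f : 'I_n.+1 -> T) :
  [tuple f i | i < n.+1] = [tuple of f ord0 :: [tuple f (lift ord0 i) | i < n]].
Proof.
apply: eq_from_tnth => i; rewrite tnth_mktuple.
by case: (unliftP ord0 i) => [j ->|->]; rewrite ?tnthS ?tnth_mktuple ?tnth0.
Qed.

Section measurable_tuple.
Context {R : realType} dX (X : measurableType dX).

Lemma measurable_mktuple n (F : X -> 'I_n -> R) :
  (forall i, measurable_fun setT (F ^~ i)) ->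
  measurable_fun setT (fun x => [tuple F x i | i < n]).
Proof.
move=> mF; apply/measurable_fun_tnthP => i.
rewrite (_ : _ \o _ = F ^~ i)//; apply/funext => x /=; exact: tnth_mktuple.
Qed.

Lemma measurable_cons_mktuple n (P : X -> R) (Q : X -> 'I_n -> R) :
  measurable_fun setT P -> (forall i, measurable_fun setT (Q ^~ i)) ->
  measurable_fun setT (fun x => [tuple of P x :: [tuple Q x i | i < n]]).
Proof.
by move=> mP mQ; apply: measurable_cons => //; exact: measurable_mktuple.
Qed.

Lemma measurable_uncurry_cons n :
  measurable_fun setT
    (fun q : (X * R) * n.-tuple R => (q.1.1, [tuple of q.1.2 :: q.2])).
Proof.
apply/measurable_fun_pairP; split.
  exact: (measurableT_comp measurable_fst measurable_fst).
apply: measurable_cons; last exact: measurable_snd.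
exact: (measurableT_comp measurable_snd measurable_fst).
Qed.

End measurable_tuple.

Section std_gauss_int.
Context {R : realType}.
Local Notation N := (@normal_prob R 0 1).

Lemma std_gauss_int_ge0 n (h : n.-tuple R -> \bar R) :
  (forall t, 0 <= h t)%E -> (0 <= std_gauss_int h)%E.
Proof.
elim: n h => [|n IH] h h0 /=; first exact: h0.
by apply: integral_ge0 => z _; apply: IH => t; exact: h0.
Qed.

Lemma eq_std_gauss_int n (h1 h2 : n.-tuple R -> \bar R) : h1 =1 h2 ->
  std_gauss_int h1 = std_gauss_int h2.
Proof. by move=> /funext ->. Qed.

Lemma measurable_std_gauss_int n dX (X : measurableType dX)
    (f : X -> n.-tuple R -> \bar R) :
  measurable_fun setT (fun p : X * n.-tuple R => f p.1 p.2) ->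
  (forall x t, 0 <= f x t)%E ->
  measurable_fun setT (fun x => std_gauss_int (f x)).
Proof.
elim: n dX X f => [|n IH] dX X f mf f0 /=.
  exact: measurable_fun_pair1 [tuple] mf.
pose g (p : X * R) (t : n.-tuple R) := f p.1 [tuple of p.2 :: t].
have mg : measurable_fun setT (fun q : (X * R) * n.-tuple R => g q.1 q.2).
  by have := measurableT_comp mf (measurable_uncurry_cons _ X n); apply.
have g0 p : (0 <= std_gauss_int (g p))%E.
  by apply: std_gauss_int_ge0 => t; exact: f0.
have mSg := IH _ _ g mg (fun _ _ => f0 _ _).
by have := @measurable_fun_fubini_tonelli_F _ _ _ _ _ N _ mSg g0; apply.
Qed.

Lemma std_gauss_int_fubini n (F : R -> n.-tuple R -> \bar R) :
  measurable_fun setT (fun p : R * n.-tuple R => F p.1 p.2) ->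
  (forall w t, 0 <= F w t)%E ->
  (\int[N]_w std_gauss_int (F w) = std_gauss_int (fun t => \int[N]_w F w t))%E.
Proof.
elim: n F => [|n IH] F mF F0 //=.
pose H (p : R * R) (t : n.-tuple R) := F p.1 [tuple of p.2 :: t].
have mH : measurable_fun setT (fun q : (R * R) * n.-tuple R => H q.1 q.2).
  by have := measurableT_comp mF (measurable_uncurry_cons _ R n); apply.
have mSH := measurable_std_gauss_int _ _ _ _ mH (fun _ _ => F0 _ _).
have SH0 p : (0 <= std_gauss_int (H p))%E.
  by apply: std_gauss_int_ge0 => t; exact: F0.
transitivity (\int[N]_z \int[N]_w std_gauss_int (H (w, z)))%E.
  exact: (@fubini_tonelli _ _ _ _ _ N N _ mSH SH0).
apply: eq_integral => z _.
apply: (IH (fun w t => F w [tuple of z :: t])); last by move=> w t; exact: F0.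
have mcons : measurable_fun setT
    (fun p : R * n.-tuple R => (p.1, [tuple of z :: p.2])).
  apply/measurable_fun_pairP; split; first exact: measurable_fst.
  by apply: measurable_cons => //; exact: measurable_snd.
by have := measurableT_comp mF mcons; apply.
Qed.

Lemma std_gauss_int_sum (a b : R) n (g : n.-tuple R -> \bar R) :
  0 <= a -> 0 <= b ->
  measurable_fun setT g -> (forall t, 0 <= g t)%E ->
  std_gauss_int (fun z : n.-tuple R => std_gauss_int (fun w : n.-tuple R =>
     g [tuple a * tnth z i + b * tnth w i | i < n])) =
  std_gauss_int (fun u : n.-tuple R =>
     g [tuple Num.sqrt (a ^+ 2 + b ^+ 2) * tnth u i | i < n]).
Proof.
move=> a_ge0 b_ge0; set r := Num.sqrt _.
elim: n g => [|n IH] g mg g0 /=; first by congr g; apply: eq_from_tnth => -[].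
pose G x (v : n.-tuple R) := g [tuple of x :: v].
have mtnth dX (X : measurableType dX) (T : X -> n.-tuple R) i :
    measurable_fun setT T -> measurable_fun setT (fun x => tnth (T x) i).
  by move=> mT; exact: measurableT_comp (measurable_tnth i) mT.
transitivity (\int[N]_z1 \int[N]_w1 std_gauss_int (fun z' : n.-tuple R =>
  std_gauss_int (fun w' : n.-tuple R =>
    G (a * z1 + b * w1)%R [tuple (a * tnth z' i + b * tnth w' i)%R | i < n])))%E.
  apply: eq_integral => z1 _; rewrite [RHS]std_gauss_int_fubini; last 2 first.
  - apply: measurable_std_gauss_int => [|p w']; last exact: g0.
    apply: measurableT_comp mg _; apply: measurable_cons_mktuple => [|i].
      apply: measurable_funD => //; apply: measurable_funM => //.
      exact: measurableT_comp measurable_fst measurable_fst.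
    apply: measurable_funD; apply: measurable_funM => //; apply: mtnth.
      exact: measurableT_comp measurable_snd measurable_fst.
    exact: measurable_snd.
  - by move=> w1 z'; apply: std_gauss_int_ge0 => w'; exact: g0.
  apply: eq_std_gauss_int => z'; apply: eq_integral => w1 _.
  apply: eq_std_gauss_int => w'; rewrite mktuple_cons !tnth0.
  by congr (g [tuple of _ :: _]); apply: eq_mktuple => i; rewrite !tnthS.
have mGr : measurable_fun setT (fun x => std_gauss_int (fun u' : n.-tuple R =>
    G x [tuple (r * tnth u' i)%R | i < n])).
  apply: measurable_std_gauss_int => [|x u']; last exact: g0.
  apply: measurableT_comp mg _; apply: measurable_cons_mktuple => // i.
  by apply: measurable_funM => //; apply: mtnth; exact: measurable_snd.
have Gr0 x : (0 <= std_gauss_int (fun u' : n.-tuple R =>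
    G x [tuple (r * tnth u' i)%R | i < n]))%E.
  by apply: std_gauss_int_ge0 => u'; exact: g0.
transitivity (\int[N]_z1 \int[N]_w1 std_gauss_int (fun u' : n.-tuple R =>
    G (a * z1 + b * w1)%R [tuple (r * tnth u' i)%R | i < n]))%E.
  apply: eq_integral => z1 _; apply: eq_integral => w1 _.
  apply: IH => [|t]; last exact: g0.
  by apply: measurableT_comp mg _; exact: measurable_cons.
rewrite (ge0_integral_normal_sum _ _ _ a_ge0 b_ge0 mGr Gr0).
apply: eq_integral => u1 _; apply: eq_std_gauss_int => u'.
rewrite mktuple_cons tnth0; congr (g [tuple of _ :: _]).
by apply: eq_mktuple => i; rewrite tnthS.
Qed.

End std_gauss_int.

Section abar.
Context {R : realType}.
Variables (T : nat) (beta : nat -> R).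
Hypothesis beta01 : forall t, (1 <= t <= T)%N -> 0 < beta t < 1.

Lemma abarS t : abar beta t.+1 = abar beta t * (1 - beta t.+1).
Proof. by rewrite /abar big_nat_recr. Qed.

Lemma abar_ge0_le1 t : (t <= T)%N -> 0 <= abar beta t <= 1.
Proof.
elim: t => [|t IH] tT; first by rewrite /abar big_geq// ler01 lexx.
have /andP[b_gt0 b_lt1] := beta01 t.+1 tT.
have /andP[a_ge0 a_le1] := IH (ltnW tT).
by rewrite abarS; apply/andP; split; nra.
Qed.

Lemma abar_lt1 t : (1 <= t <= T)%N -> abar beta t < 1.
Proof.
case: t => [//|t] /andP[_ tT].
have /andP[b_gt0 b_lt1] := beta01 t.+1 tT.
have /andP[a_ge0 a_le1] := abar_ge0_le1 t (ltnW tT).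
by rewrite abarS; nra.
Qed.

End abar.

Section card_marginals.
Context {R : realType}.
Variables (beta sigma : nat -> R) (d : nat) (y0 f : d.-tuple R).
Local Notation mean := (card_mean beta y0 f).
Local Notation mu := (card_mu beta sigma y0 f).

Lemma measurable_card_reverse_int t (g : d.-tuple R -> \bar R) :
  measurable_fun setT g -> (forall y, (0 <= g y)%E) ->
  measurable_fun setT (fun yt => gauss_int (mu t yt) (sigma t) g).
Proof.
move=> mg g0; apply: measurable_std_gauss_int => [|yt w]; last exact: g0.
apply: measurableT_comp mg _; apply: measurable_mktuple => i /=.
under eq_fun do rewrite tnth_mktuple.
apply: measurable_funD; last first.
  apply: measurable_funM => //.
  exact: measurableT_comp (measurable_tnth i) measurable_snd.
apply: measurable_funD => //; do 2 apply: measurable_funM => //.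
apply: measurable_funB => //.
exact: measurableT_comp (measurable_tnth i) measurable_fst.
Qed.

Lemma card_reverse_step t (g : d.-tuple R -> \bar R) :
  measurable_fun setT g -> (forall y, (0 <= g y)%E) ->
  0 < 1 - abar beta t -> 0 <= sigma t ->
  0 <= 1 - abar beta t.-1 - sigma t ^+ 2 ->
  gauss_int (mean t) (Num.sqrt (1 - abar beta t))
    (fun yt => gauss_int (mu t yt) (sigma t) g)
  = gauss_int (mean t.-1) (Num.sqrt (1 - abar beta t.-1)) g.
Proof.
move=> mg g0 fwd_var_gt0 sigma_ge0 rev_var_ge0.
set s := Num.sqrt (1 - abar beta t).
pose c := Num.sqrt (1 - abar beta t.-1 - sigma t ^+ 2).
have s_neq0 : s != 0 by rewrite gt_eqF// sqrtr_gt0.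
pose g' (v : d.-tuple R) := g [tuple tnth (mean t.-1) i + tnth v i | i < d].
have mg' : measurable_fun setT g'.
  apply: measurableT_comp mg _; apply: measurable_mktuple => i.
  exact: measurable_funD (measurable_cst _) (measurable_tnth i).
transitivity (std_gauss_int (fun z : d.-tuple R =>
  std_gauss_int (fun w : d.-tuple R =>
    g' [tuple c * tnth z i + sigma t * tnth w i | i < d]))).
  apply: eq_std_gauss_int => z; apply: eq_std_gauss_int => w; congr g.
  apply: eq_from_tnth => i; rewrite !tnth_mktuple /card_mu -/s /c.
  by field.
rewrite std_gauss_int_sum ?sqrtr_ge0//; last by move=> v; exact: g0.
rewrite /c (sqr_sqrtr rev_var_ge0) subrK.
rewrite /gauss_int; apply: eq_std_gauss_int => u; rewrite /g'; congr g.
by apply: eq_from_tnth => i; rewrite !tnth_mktuple.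
Qed.

End card_marginals.

Section card_marg_int.
Context {R : realType}.
Variables (T d : nat) (beta sigma : nat -> R) (y0 f : d.-tuple R).
Hypothesis beta01 : forall t, (1 <= t <= T)%N -> 0 < beta t < 1.
Hypothesis sigma_ge0 : forall t, (2 <= t <= T)%N -> 0 <= sigma t.
Hypothesis rev_var_ge0 :
  forall t, (2 <= t <= T)%N -> 0 <= 1 - abar beta t.-1 - sigma t ^+ 2.

Lemma card_marg_intE k (g : d.-tuple R -> \bar R) : (k <= T.-1)%N ->
  measurable_fun setT g -> (forall y, (0 <= g y)%E) ->
  card_marg_int beta sigma y0 f T k g =
  gauss_int (card_mean beta y0 f (T - k)) (Num.sqrt (1 - abar beta (T - k))) g.
Proof.
elim: k g => [|k IH] g kT mg g0 /=; first by rewrite subn0.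
have tT : (2 <= T - k <= T)%N by lia.
rewrite IH ?(ltnW kT)//; last 2 first.
- exact: measurable_card_reverse_int.
- by move=> y; apply: std_gauss_int_ge0 => w; exact: g0.
rewrite card_reverse_step//; first by rewrite subnS.
- by rewrite subr_gt0 (abar_lt1 _ _ beta01)//; lia.
- exact: sigma_ge0.
- exact: rev_var_ge0.
Qed.

End card_marg_int.

Theorem mainTheorem4 (R : realType) (T d : nat) (beta sigma : nat -> R)
  (y0 f : d.-tuple R)
  (hbeta : forall t, (1 <= t <= T)%N -> 0 < beta t < 1)
  (hsigma : forall t, (2 <= t <= T)%N -> 0 <= sigma t)
  (hvar : forall t, (2 <= t <= T)%N -> 0 <= 1 - abar beta t.-1 - sigma t ^+ 2) :
  forall t, (1 <= t <= T)%N ->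
  forall A : set (d.-tuple R), measurable A ->
    card_marg beta sigma y0 f T t A
    = gauss_prob (card_mean beta y0 f t) (Num.sqrt (1 - abar beta t)) A.
Proof.
move=> t /andP[t_ge1 tT] A mA.
rewrite /card_marg /gauss_prob card_marg_intE//; first by rewrite subKn.
- lia.
- exact/measurable_EFinP/measurable_indic.
Qed.
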